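(* Let $G$ be a cubic graph of order $2n$ and let $m$ be a positive integer. If $m<\left\lceil \frac{3n}{4}\right\rceil$, then $\chi'_{[m]}(G)=\left\lceil \frac{3n}{m}\right\rceil$.
   Context: All graphs are finite, simple (no loops, no parallel edges), connected and cubic (3-regular). For a positive integer $m$, an $[m]$-matching of $G$ is a matching of $G$ with exactly $m$ edges. The excessive $[m]$-index $\chi'_{[m]}(G)$ is the minimum number of $[m]$-matchings of $G$ whose union is $E(G)$ (a covering of $E(G)$ by $[m]$-matchings); if some edge of $G$ lies in no $[m]$-matching, one sets $\chi'_{[m]}(G)=\infty$. *)

From mathcomp Require Import all_boot.
Set Implicit Arguments. Unset Strict Implicit. Unset Printing Implicit Defensive.

Definition simple_graph (T : finType) (e : rel T) : Prop :=
  irreflexive e /\ symmetric e.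

Definition cubic (T : finType) (e : rel T) : Prop :=
  forall x : T, #|[set y | e x y]| = 3.

Definition connected_graph (T : finType) (e : rel T) : Prop :=
  forall x y : T, connect e x y.

Definition edges (T : finType) (e : rel T) : {set {set T}} :=
  [set A : {set T} | [exists x, exists y, e x y && (A == [set x; y])]].

Definition matching (T : finType) (e : rel T) (M : {set {set T}}) : Prop :=
  M \subset edges e /\
  (forall A B, A \in M -> B \in M -> A != B -> [disjoint A & B]).

Definition m_matching (T : finType) (e : rel T) (m : nat) (M : {set {set T}}) : Prop :=
  matching e M /\ #|M| = m.

Definition m_cover (T : finType) (e : rel T) (m k : nat) : Prop :=
  exists F : 'I_k -> {set {set T}},
    (forall i, m_matching e m (F i)) /\ \bigcup_(i < k) F i = edges e.

Definition excessive_index_eq (T : finType) (e : rel T) (m k : nat) : Prop :=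
  m_cover e m k /\ (forall j, m_cover e m j -> k <= j).

Definition ceil_div (a b : nat) : nat := (a + b.-1) %/ b.

From mathcomp Require Import all_boot zify.
Set Implicit Arguments. Unset Strict Implicit. Unset Printing Implicit Defensive.

(* G has 3n edges (handshake lemma).  The lower bound k <= j for a covering by j
   [m]-matchings is counting: they cover at most j * m edges.  For the upper bound note
   that 4m < 3n, hence k >= 5, and
   1. G has a proper edge colouring with four colours (Vizing's theorem for maximum
      degree 3), proved by induction on the edges with a Kempe-chain swap;
   2. one colour class has more than m edges; adding copies of r = km - 3n < m of its
      edges, with a fifth colour, gives a proper k-colouring of a family of km
      edge-copies, in which two copies of an edge clash;
   3. a proper k-colouring of km pairs can be equalized to classes of exactly m
      members, by repeatedly re-balancing two classes along alternating paths;
   4. the k equal classes are then k [m]-matchings covering every edge.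
   The development works with "packings": families of members with pairwise disjoint
   vertex sets, i.e. matchings of a multigraph whose edges are the members. *)

Lemma pair_at (T : finType) (S : {set T}) x :
  #|S| = 2 -> x \in S -> exists y, x != y /\ S = [set x; y].
Proof.
move=> /eqP/cards2P[a [b [ab ->]]] /set2P[]->; first by exists b.
by exists a; rewrite setUC eq_sym.
Qed.

Lemma set3P (U : finType) (u a b c : U) :
  reflect [\/ u = a, u = b | u = c] (u \in [set a; b; c]).
Proof.
rewrite !inE; apply: (iffP idP) => [/orP[/orP[]|]/eqP|[]->]; rewrite ?eqxx ?orbT //.
- by constructor 1.
- by constructor 2.
- by constructor 3.
Qed.

Lemma set2_inj (U : finType) (v u1 u2 : U) :
  v != u1 -> [set v; u1] = [set v; u2] -> u1 = u2.
Proof.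
move=> vu1 eq12; have : u1 \in [set v; u2] by rewrite -eq12 set22.
by case/set2P=> // u1v; rewrite u1v eqxx in vu1.
Qed.

Lemma card_filter_sum (U : finType) (D : {set U}) (P : pred U) :
  #|[set y in D | P y]| = \sum_(y in D) P y.
Proof.
rewrite -sum1_card big_mkcond [RHS]big_mkcond /=.
by apply: eq_bigr => y _; rewrite !inE; case: (y \in D); case: (P y).
Qed.

Lemma cardsU_disjoint (U : finType) (A B : {set U}) :
  [disjoint A & B] -> #|A :|: B| = #|A| + #|B|.
Proof. by move=> dAB; apply/eqP; rewrite (leq_card_setU A B).2. Qed.

Lemma card_bigcup_le (U : finType) j (F : 'I_j -> {set U}) :
  #|\bigcup_(i < j) F i| <= \sum_(i < j) #|F i|.
Proof.
elim/big_rec2: _ => [|i s U' _ le_U]; first by rewrite cards0.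
by rewrite cardsU; apply: leq_trans (leq_subr _ _) _; apply: leq_add.
Qed.

Lemma subset_of_card (U : finType) (S : {set U}) r :
  r <= #|S| -> exists2 R : {set U}, R \subset S & #|R| = r.
Proof.
elim: r => [|r IH] le_rS; first by exists set0; rewrite ?sub0set ?cards0.
have [R RS sizeR] := IH (ltnW le_rS).
have /card_gt0P[x /setDP[xS xR]] : 0 < #|S :\: R|.
  by rewrite cardsD (setIidPr RS) sizeR subn_gt0.
by exists (x |: R); rewrite ?subUset ?sub1set ?xS // cardsU1 xR sizeR.
Qed.

Lemma ltn_sum_ord k (f g : 'I_k -> nat) a :
  (forall d, f d <= g d) -> f a < g a -> \sum_(d < k) f d < \sum_(d < k) g d.
Proof.
move=> le_fg lt_a; rewrite (bigD1 a) // [X in _ < X](bigD1 a) //= -addSn.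
by apply: leq_add lt_a _; apply: leq_sum => d _.
Qed.

Lemma spread_of_sum k (f : 'I_k -> nat) m : \sum_(d < k) f d = k * m ->
  (forall d, f d = m) \/ exists a c, m < f a /\ f c < m.
Proof.
move=> sum_f; have sum_m : \sum_(d < k) m = k * m by rewrite sum_nat_const card_ord.
have [le_m|/forallPn[a]] := boolP [forall d, f d <= m].
  left=> d; apply/eqP; rewrite eqn_leq (forallP le_m d) leqNgt; apply/negP => lt_d.
  by move: (@ltn_sum_ord k f (fun=> m) d (forallP le_m) lt_d); rewrite sum_f sum_m ltnn.
rewrite -ltnNge => lt_a; right; exists a.
have [ge_m|/forallPn[c]] := boolP [forall d, m <= f d].
  by move: (@ltn_sum_ord k (fun=> m) f a (forallP ge_m) lt_a); rewrite sum_f sum_m ltnn.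
by rewrite -ltnNge => lt_c; exists c.
Qed.

Lemma pigeonhole_sum k (f : 'I_k -> nat) m :
  k * m < \sum_(d < k) f d -> exists d, m < f d.
Proof.
move=> big_sum; apply/existsP; apply: contraTT big_sum => /existsPn small.
rewrite -leqNgt -[k in k * m]card_ord -sum_nat_const.
by apply: leq_sum => d _; rewrite leqNgt small.
Qed.

Lemma ceil_div_leq a b j : 0 < b -> (ceil_div a b <= j) = (a <= j * b).
Proof. by move=> b_gt0; rewrite /ceil_div -ltnS ltn_divLR // mulSn; lia. Qed.

Lemma ceil_div_bounds a b : 0 < b -> a <= ceil_div a b * b < a + b.
Proof.
move=> b_gt0; rewrite -ceil_div_leq // leqnn /= /ceil_div.
by have := leq_divM (a + b.-1) b; lia.
Qed.

Section Packings.
(* Members i of the finite type I have vertex sets vs i; when all vertex sets are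
   pairs, I is the edge set of a multigraph and packings are its matchings. *)
Variables (T I : finType) (vs : I -> {set T}).
Implicit Types (S A C D P Q R : {set I}) (i j k : I) (w x : T).

Definition packing (S : {set I}) :=
  forall i j, i \in S -> j \in S -> i != j -> [disjoint vs i & vs j].

Definition covers (S : {set I}) (w : T) : bool := [exists i in S, w \in vs i].

Definition pairs_on (S : {set I}) := forall i, i \in S -> #|vs i| = 2.

Lemma coversP S w : reflect (exists2 i, i \in S & w \in vs i) (covers S w).
Proof. exact: (iffP exists_inP). Qed.

Lemma covers_subset S1 S2 w : S1 \subset S2 -> covers S1 w -> covers S2 w.
Proof. by move=> /subsetP sub12 /coversP[i /sub12 iS2 wi]; apply/coversP; exists i. Qed.

Lemma coversU S1 S2 w : covers (S1 :|: S2) w = covers S1 w || covers S2 w.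
Proof.
apply/coversP/orP => [[i]|[]/coversP[i iS wi]].
- by rewrite inE => /orP[] iS wi; [left|right]; apply/coversP; exists i.
- by exists i; rewrite // inE iS.
- by exists i; rewrite // inE iS orbT.
Qed.

Lemma covers1U i S w : covers (i |: S) w = (w \in vs i) || covers S w.
Proof.
rewrite coversU; congr (_ || _).
by apply/coversP/idP => [[j /set1P-> //]|wi]; exists i; rewrite ?set11.
Qed.

Lemma packing_subset S1 S2 : S1 \subset S2 -> packing S2 -> packing S1.
Proof. by move=> /subsetP sub12 pS2 i j /sub12 iS /sub12 jS; apply: pS2. Qed.

Lemma packing_unique S i j w :
  packing S -> i \in S -> j \in S -> w \in vs i -> w \in vs j -> i = j.
Proof.
move=> pS iS jS wi wj; apply/eqP/negPn/negP => /(pS _ _ iS jS) dij.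
by rewrite (disjointFr dij wi) in wj.
Qed.

Lemma coversD1 S i w :
  packing S -> i \in S -> covers (S :\ i) w = covers S w && (w \notin vs i).
Proof.
move=> pS iS; apply/coversP/andP => [[j /setD1P[ji jS] wj]|[/coversP[j jS wj] wNi]].
  split; first by apply/coversP; exists j.
  by apply: contra ji => wi; rewrite (packing_unique pS jS iS wj wi).
by exists j => //; rewrite !inE jS andbT; apply: contraNneq wNi => <-.
Qed.

Lemma packing_setU1 i S :
  packing S -> (forall j, j \in S -> j != i -> [disjoint vs i & vs j]) ->
  packing (i |: S).
Proof.
move=> pS di j1 j2 /setU1P[->|j1S] /setU1P[->|j2S]; rewrite ?eqxx // => ne.
- by apply: di; rewrite // eq_sym.
- by rewrite disjoint_sym; apply: di.
- exact: pS.
Qed.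

Lemma packing_setU1_uncovered i S :
  packing S -> (forall w, w \in vs i -> ~~ covers S w) -> packing (i |: S).
Proof.
move=> pS unc; apply: packing_setU1 => // j jS _; rewrite disjoint_subset.
apply/subsetP => w wi; rewrite inE; apply: contraNN (unc w wi) => wj.
by apply/coversP; exists j.
Qed.

(* One step of a Kempe-chain swap: the member i1 = {x, x1} of C, whose end x is not
   covered by A, moves to the A-side once the remaining members have been re-split
   into packings P, Q with x1 not covered by Q. *)
Lemma kempe_step A C P Q i1 x x1 :
  [disjoint A & C] -> packing A -> packing C -> ~~ covers A x ->
  i1 \in C -> vs i1 = [set x; x1] ->
  P :|: Q = (C :\ i1) :|: A -> [disjoint P & Q] -> packing P -> packing Q ->
  ~~ covers Q x1 ->
  [/\ (i1 |: Q) :|: P = A :|: C, [disjoint i1 |: Q & P], packing (i1 |: Q)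
    & ~~ covers P x].
Proof.
move=> dAC pA pC nAx i1C vi1 PQ dPQ pP pQ nQx1.
have i1A : i1 \notin A by apply: contraL i1C => /(disjointFr dAC) ->.
have nRx : ~~ covers ((C :\ i1) :|: A) x.
  by rewrite coversU coversD1 // vi1 set21 andbF (negbTE nAx).
have nPx : ~~ covers P x by apply: contra nRx; apply: covers_subset; rewrite -PQ subsetUl.
have nQx : ~~ covers Q x by apply: contra nRx; apply: covers_subset; rewrite -PQ subsetUr.
have i1P : i1 \notin P.
  apply/negP => i1P; have : i1 \in P :|: Q by rewrite inE i1P.
  by rewrite PQ !inE eqxx (negbTE i1A).
split=> //.
- by rewrite -setUA [Q :|: P]setUC PQ setUA setD1K // setUC.
- by rewrite disjoints_subset subUset sub1set -disjoints_subset disjoint_sym dPQ inE i1P.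
- by apply: packing_setU1_uncovered => // w; rewrite vi1 => /set2P[]->.
Qed.

(* Let A, C be disjoint packings of pairs and x a vertex not covered
   by A.  Exchanging A and C along the alternating path starting at x yields a re-split
   A', C' in which x is covered by A' iff it was by C, x is not covered by C', and the
   coverage of every other vertex is unchanged except possibly at the far end w0. *)
Lemma kempe_swap A C x :
  pairs_on (A :|: C) -> [disjoint A & C] -> packing A -> packing C -> ~~ covers A x ->
  exists A' C' w0, [/\ A' :|: C' = A :|: C, [disjoint A' & C'], packing A' /\ packing C',
    covers A' x = covers C x /\ ~~ covers C' x &
    forall w, w != x -> w != w0 -> covers A' w = covers A w /\ covers C' w = covers C w].
Proof.
have [n] := ubnP #|A :|: C|; elim: n => // n IH in A C x *; rewrite ltnS => sizeAC.
move=> pairsAC dAC pA pC nAx.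
have [/coversP[i1 i1C xi1]|nCx] := boolP (covers C x); last first.
  by exists A, C, x; split => //; rewrite (negbTE nCx) (negbTE nAx).
(* i1 = {x, x1} is the member of C at x, the first link of the chain. *)
have [x1 [_ vi1]] := pair_at (pairsAC i1 (subsetP (subsetUr A C) _ i1C)) xi1.
have pC0 : packing (C :\ i1) := packing_subset (subsetDl _ _) pC.
have dC0A : [disjoint C :\ i1 & A].
  by rewrite disjoint_sym; apply: disjointWr dAC; apply: subsetDl.
have nC0x1 : ~~ covers (C :\ i1) x1 by rewrite coversD1 // vi1 set22 andbF.
have vi1_other w : w != x -> w != x1 -> w \notin vs i1.
  by move=> wx wx1; rewrite vi1 !inE negb_or wx wx1.
(* If A does not cover x1, the chain ends there: just move i1 to the A-side. *)
have [Ax1|nAx1] := boolP (covers A x1); last first.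
  have [ACe dAC' pA' nC0x] :=
    kempe_step dAC pA pC nAx i1C vi1 (erefl _) dC0A pC0 pA nAx1.
  exists (i1 |: A), (C :\ i1), x1; split=> //; first by rewrite covers1U vi1 set21.
  move=> w wx wx1; have wi1 := vi1_other w wx wx1.
  by rewrite covers1U coversD1 // (negbTE wi1) andbT.
(* Otherwise swap the rest of the chain from x1, with the roles of A and C exchanged. *)
have sizeC0A : #|(C :\ i1) :|: A| < n.
  apply: leq_trans sizeAC; rewrite (cardsD1 i1 (A :|: C)) inE i1C orbT add1n ltnS.
  apply: subset_leq_card; apply/subsetP => j.
  rewrite !inE => /orP[/andP[-> ->]|jA]; rewrite ?orbT // jA andbT.
  by apply: contraTneq jA => ->; rewrite (disjointFl dAC i1C).
have pairsC0A : pairs_on ((C :\ i1) :|: A).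
  move=> j; rewrite !inE => /orP[/andP[_ jC]|jA]; apply: pairsAC;
  by rewrite inE ?jC ?jA ?orbT.
have [P [Q [w0 [PQ dPQ [pP pQ] [Px1 nQx1] unchanged]]]] :=
  IH (C :\ i1) A x1 sizeC0A pairsC0A dC0A pC0 pA nC0x1.
have [ACe dAC' pA' nPx] := kempe_step dAC pA pC nAx i1C vi1 PQ dPQ pP pQ nQx1.
exists (i1 |: Q), P, w0; split=> //; first by rewrite covers1U vi1 set21.
move=> w wx ww0; have [->|wx1] := eqVneq w x1.
  rewrite covers1U vi1 set22 Px1 Ax1; split=> //.
  by apply/esym/coversP; exists i1; rewrite // vi1 set22.
have wi1 := vi1_other w wx wx1; rewrite covers1U (negbTE wi1).
by have [-> ->] := unchanged w wx1 ww0; rewrite coversD1 // wi1 andbT.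
Qed.

Definition meet i j := ~~ [disjoint vs i & vs j].

Lemma meetP i j : reflect (exists2 w, w \in vs i & w \in vs j) (meet i j).
Proof.
rewrite /meet -setI_eq0; apply: (iffP (set0Pn _)) => [[w /setIP[]]|[w wi wj]].
  by exists w.
by exists w; apply/setIP.
Qed.

Lemma meetC i j : meet i j = meet j i.
Proof. by rewrite /meet disjoint_sym. Qed.

Definition meeting S i := [set j in S | meet j i].

(* A pair meets at most two members of a packing, one at each of its vertices. *)
Lemma card_meeting_pair S i : packing S -> #|vs i| = 2 -> #|meeting S i| <= 2.
Proof.
move=> pS /eqP/cards2P[u [v [_ vi]]].
pose hit j := if u \in vs j then u else v.
have hitP j : j \in meeting S i -> hit j \in vs j.
  rewrite inE => /andP[_ /meetP[w wj]]; rewrite vi /hit.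
  case: ifP => // /negbT uj /set2P[] wuv; move: wj; rewrite wuv //.
  by rewrite (negbTE uj).
rewrite -(@card_in_imset _ _ hit); last first.
  move=> j1 j2 j1M j2M e12; have [h1 h2] := (hitP j1 j1M, hitP j2 j2M).
  move: j1M j2M; rewrite !inE => /andP[j1S _] /andP[j2S _].
  by apply: (packing_unique pS j1S j2S h1); rewrite e12.
apply: leq_trans (subset_leq_card (_ : _ \subset [set u; v])) _.
  by apply/subsetP => _ /imsetP[j _ ->]; rewrite /hit; case: ifP; rewrite !inE eqxx ?orbT.
by rewrite cards2; case: (u != v).
Qed.

(* If |D| < |C| then some member of C meets at most one member of D: each pair of D
   meets at most two members of C, so double counting the meetings forbids all members
   of C to meet two members of D. *)
Lemma low_meeting C D : packing C -> pairs_on D -> #|D| < #|C| ->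
  exists2 i, i \in C & #|meeting D i| <= 1.
Proof.
move=> pC pairsD DC.
have [/exists_inP //|/exists_inP none] := boolP [exists i in C, #|meeting D i| <= 1].
have high i : i \in C -> 2 <= #|meeting D i|.
  by move=> iC; rewrite ltnNge; apply/negP => low; apply: none; exists i.
have lower : 2 * #|C| <= \sum_(i in C) #|meeting D i|.
  by rewrite -sum1_card big_distrr /=; apply: leq_sum => i iC; rewrite muln1 high.
have upper : \sum_(i in C) #|meeting D i| <= 2 * #|D|.
  under eq_bigr => i _ do rewrite card_filter_sum.
  rewrite exchange_big -sum1_card big_distrr /=; apply: leq_sum => j jD.
  under eq_bigr => i _ do rewrite meetC.
  by rewrite muln1 -card_filter_sum; apply: card_meeting_pair (pairsD j jD).
by move: (leq_trans lower upper); rewrite leq_pmul2l // leqNgt DC.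
Qed.

Lemma split_setU1 C0 D0 R a b :
  C0 :|: D0 = R -> [disjoint C0 & D0] -> a \notin R -> b \notin R -> a != b ->
  [/\ (a |: C0) :|: (b |: D0) = a |: (b |: R), [disjoint a |: C0 & b |: D0]
    & #|a |: C0| = #|C0|.+1].
Proof.
move=> CD0 dCD0 aR bR ab.
have aC0 : a \notin C0 by apply: contra aR; rewrite -CD0 inE => ->.
have bC0 : b \notin C0 by apply: contra bR; rewrite -CD0 inE => ->.
have aD0 : a \notin D0 by apply: contra aR; rewrite -CD0 inE => ->; rewrite orbT.
split.
- by rewrite -CD0 -setUA [X in a |: X]setUCA.
- rewrite disjoints_subset subUset sub1set !inE negb_or ab aD0 /=.
  apply/subsetP => j jC0; rewrite !inE negb_or (disjointFr dCD0 jC0) andbT.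
  by apply: contraNneq bC0 => <-.
- by rewrite cardsU1 aC0.
Qed.

(* In the balancing argument, i in C meets the member j of D.  Since j is a pair, it
   meets at most two members of the packing C, one of which is i: so at most one member
   of (C \ i) u (D \ j) meets j (members of D \ j do not meet j at all). *)
Lemma meeting_rest_unique C D i j k1 k2 :
  packing C -> packing D -> #|vs j| = 2 -> i \in C -> j \in D -> meet j i ->
  k1 \in (C :\ i) :|: (D :\ j) -> k2 \in (C :\ i) :|: (D :\ j) ->
  meet k1 j -> meet k2 j -> k1 = k2.
Proof.
move=> pC pD pairj iC jD meet_ji.
have inCi k : k \in (C :\ i) :|: (D :\ j) -> meet k j -> k \in meeting (C :\ i) j.
  case/setUP=> /setD1P[kj kX] kmeet; first by rewrite inE kmeet !inE kj kX.
  by move: kmeet; rewrite /meet (pD _ _ kX jD kj).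
have : #|meeting C j| <= 2 := card_meeting_pair pC pairj.
rewrite (cardsD1 i) inE iC meetC meet_ji add1n ltnS => le1.
have {}le1 : #|meeting (C :\ i) j| <= 1.
  by apply: leq_trans (subset_leq_card _) le1; apply/subsetP => k; rewrite !inE andbA.
by move=> k1R k2R m1 m2; apply: (card_le1_eqP le1); apply: inCi.
Qed.

(* Re-insertion step of the balancing argument: i in C meets the member j of D and no
   other member of D.  Once (C \ i, D \ j) has been re-split into packings (C0, D0),
   both i and j can be put back on opposite sides: i meets nothing left, and j fits on
   the D-side if the only member of C \ i it may meet lies in C0, and on the C-side
   otherwise. *)
Lemma balance_reinsert C D i j (C0 D0 : {set I}) :
  [disjoint C & D] -> packing C -> packing D -> #|vs j| = 2 ->
  i \in C -> j \in D -> meeting D i = [set j] ->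
  C0 :|: D0 = (C :\ i) :|: (D :\ j) -> [disjoint C0 & D0] -> packing C0 -> packing D0 ->
  exists C' D', [/\ C' :|: D' = C :|: D, [disjoint C' & D'], packing C', packing D'
    & #|C'| = #|C0|.+1].
Proof.
move=> dCD pC pD pairj iC jD meetDi CD0 dCD0 pC0 pD0.
have meet_ji : meet j i by have := set11 j; rewrite -meetDi inE => /andP[].
have j_unique := meeting_rest_unique pC pD pairj iC jD meet_ji.
set R := (C :\ i) :|: (D :\ j) in CD0 j_unique *.
have CDe : C :|: D = i |: (j |: R) by rewrite [X in i |: X]setUCA setUA !setD1K.
have iR : i \notin R by rewrite !inE eqxx (disjointFr dCD iC) andbF.
have jR : j \notin R by rewrite !inE eqxx (disjointFl dCD jD) andbF.
have ij : i != j by apply: contraTneq jD => <-; rewrite (disjointFr dCD iC).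
have ji : j != i by rewrite eq_sym.
have i_free k : k \in R -> [disjoint vs i & vs k].
  case/setUP=> /setD1P[ki kX]; first by apply: pC; rewrite // eq_sym.
  have : k \notin meeting D i by rewrite meetDi inE.
  by rewrite inE kX /meet negbK disjoint_sym.
(* If a member z of C0 meets j, then no member of D0 does: put j on the D-side. *)
have [/exists_inP[z zC0 zj]|none] := boolP [exists k in C0, meet k j].
  have [CDe' dCD' card'] := split_setU1 CD0 dCD0 iR jR ij.
  exists (i |: C0), (j |: D0); split=> //; first by rewrite CDe' CDe.
    by apply: packing_setU1 => // k kC0 _; apply: i_free; rewrite -CD0 inE kC0.
  apply: packing_setU1 => // k kD0 kj; apply/negPn/negP; rewrite -/(meet j k) meetC.
  have kR : k \in R by rewrite -CD0 inE kD0 orbT.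
  have zR : z \in R by rewrite -CD0 inE zC0.
  by move/(j_unique _ _ kR zR)/(_ zj) => kz; rewrite kz (disjointFr dCD0 zC0) in kD0.
have [CDe' dCD' card'] := split_setU1 CD0 dCD0 jR iR ji.
exists (j |: C0), (i |: D0); split=> //; first by rewrite CDe' setUCA CDe.
  apply: packing_setU1 => // k kC0 _; rewrite disjoint_sym.
  by apply/negPn; apply: contraNN none => kj; apply/exists_inP; exists k.
by apply: packing_setU1 => // k kD0 _; apply: i_free; rewrite -CD0 inE kD0 orbT.
Qed.

Lemma balance C D :
  pairs_on (C :|: D) -> [disjoint C & D] -> packing C -> packing D -> #|D| < #|C| ->
  exists C' D', [/\ C' :|: D' = C :|: D, [disjoint C' & D'], packing C', packing D'
    & #|C'|.+1 = #|C|].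
Proof.
have [n] := ubnP #|C|; elim: n => // n IH in C D *; rewrite ltnS => sizeC.
move=> pairsCD dCD pC pD DC.
have pairsD : pairs_on D by move=> j jD; apply: pairsCD; rewrite inE jD orbT.
have [i iC lowi] := low_meeting pC pairsD DC.
have sizeCi : #|C :\ i|.+1 = #|C| by rewrite (cardsD1 i C) iC.
move: lowi; rewrite leq_eqVlt ltnS leqn0 cards_eq0 => /orP[/cards1P[j meetDi]|/eqP nomeet].
  (* i meets a single member j of D: balance without i and j, then put them back. *)
  have jD : j \in D by have := set11 j; rewrite -meetDi inE => /andP[].
  have sizeDj : #|D :\ j|.+1 = #|D| by rewrite (cardsD1 j D) jD.
  have [||||||C0 [D0 [CD0 dCD0 pC0 pD0 size0]]] := IH (C :\ i) (D :\ j).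
  - by rewrite -ltnS sizeCi.
  - by move=> k; rewrite !inE => /orP[]/andP[_ kX]; apply: pairsCD; rewrite inE kX ?orbT.
  - by apply: disjointWl (subsetDl _ _) (disjointWr (subsetDl _ _) dCD).
  - exact: packing_subset (subsetDl _ _) pC.
  - exact: packing_subset (subsetDl _ _) pD.
  - by rewrite -ltnS sizeDj sizeCi.
  have [C' [D' [CDe dCD' pC' pD' size']]] := balance_reinsert dCD pC pD (pairsD j jD)
    iC jD meetDi CD0 dCD0 pC0 pD0.
  by exists C', D'; rewrite size' size0 sizeCi.
(* i meets no member of D: move it to the D-side. *)
exists (C :\ i), (i |: D); split.
- by rewrite setUCA setUA setD1K.
- rewrite disjoints_subset; apply/subsetP => k; rewrite !inE negb_or => /andP[ki kC].
  by rewrite ki (disjointFr dCD kC).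
- exact: packing_subset (subsetDl _ _) pC.
- apply: packing_setU1 => // k kD _; have : k \notin meeting D i by rewrite nomeet inE.
  by rewrite inE kD /meet negbK disjoint_sym.
- exact: sizeCi.
Qed.

End Packings.

Section Colourings.
Variables (T I : finType) (vs : I -> {set T}) (k : nat) (X : {set I}).
Implicit Types (col : I -> 'I_k) (a c d : 'I_k) (A C : {set I}).

Definition colour_class col d := [set i in X | col i == d].
Definition proper col := forall d, packing vs (colour_class col d).

Lemma sum_colour_classes col : \sum_(d < k) #|colour_class col d| = #|X|.
Proof.
under eq_bigr => d _ do rewrite card_filter_sum.
rewrite exchange_big /= -sum1_card; apply: eq_bigr => i _.
by rewrite (bigD1 (col i)) //= eqxx big1 ?addn0 // => d; rewrite eq_sym => /negbTE->.
Qed.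

Lemma recolour col a c A' C' :
  a != c -> proper col ->
  A' :|: C' = colour_class col a :|: colour_class col c -> [disjoint A' & C'] ->
  packing vs A' -> packing vs C' ->
  exists col', [/\ proper col', colour_class col' a = A', colour_class col' c = C'
    & forall d, d != a -> d != c -> colour_class col' d = colour_class col d].
Proof.
move=> ac pcol ACe dAC pA pC.
pose col' i := if i \in A' then a else if i \in C' then c else col i.
have inAC i : (i \in A') || (i \in C') = (i \in X) && ((col i == a) || (col i == c)).
  by move/setP: ACe => /(_ i); rewrite !inE -andb_orr.
have diff_col i d :
    d != a -> d != c -> (col i == a) || (col i == c) -> (col i == d) = false.
  by move=> da dc /orP[]/eqP->; rewrite eq_sym ?(negbTE da) ?(negbTE dc).
have classes d : colour_class col' d =
    if d == a then A' else if d == c then C' else colour_class col d.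
  apply/setP => i; rewrite [in LHS]inE /col'; have := inAC i.
  case: (eqVneq d a) => [->|da]; [|case: (eqVneq d c) => [->|dc]];
    rewrite ?eqxx ?(negbTE da) ?(negbTE dc) /=.
  - case: (boolP (i \in A')) => [iA /esym/andP[-> _]|nA]; rewrite ?eqxx //=.
    case: (boolP (i \in C')) => [iC _|nC /esym/negbT nX].
      by rewrite eq_sym (negbTE ac) andbF.
    by apply/negbTE; apply: contra nX => /andP[-> ->].
  - case: (boolP (i \in A')) => [iA _|nA].
      by rewrite (negbTE ac) andbF (disjointFr dAC iA).
    case: (boolP (i \in C')) => [iC /esym/andP[-> _]|nC /esym/negbT nX]; rewrite ?eqxx //.
    by apply/negbTE; apply: contra nX => /andP[-> ->]; rewrite orbT.
  - rewrite inE; case: (boolP (i \in A')) => [iA /esym/andP[-> col_ac]|nA].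
      by rewrite diff_col // eq_sym (negbTE da).
    case: (boolP (i \in C')) => [iC /esym/andP[-> col_ac]|nC _] //.
    by rewrite diff_col // eq_sym (negbTE dc).
exists col'; split.
- by move=> d; rewrite classes; case: ifP => _; [|case: ifP => _].
- by rewrite classes eqxx.
- by rewrite classes eq_sym (negbTE ac) eqxx.
- by move=> d da dc; rewrite classes (negbTE da) (negbTE dc).
Qed.

Lemma colour_classes_disjoint col a c :
  a != c -> [disjoint colour_class col a & colour_class col c].
Proof.
move=> ac; rewrite -setI_eq0; apply/eqP/setP => i; rewrite !inE.
by case: eqP => [->|_]; rewrite ?(negbTE ac) !andbF.
Qed.

(* Equalization: a proper colouring of a set X of k * m pairs can be turned into a proper
   colouring whose classes all have exactly m members, by repeatedly balancing a class
   larger than m against one smaller than m; the total excess over m decreases. *)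
Lemma equalize m col :
  proper col -> pairs_on vs X -> #|X| = k * m ->
  exists col', proper col' /\ forall d, #|colour_class col' d| = m.
Proof.
move=> + pairsX sizeX.
pose excess col := \sum_(d < k) (#|colour_class col d| - m).
have [N] := ubnP (excess col); elim: N => // N IH in col *; rewrite ltnS => exc pcol.
have := spread_of_sum (etrans (sum_colour_classes col) sizeX).
case=> [all_m|[a [c [big small]]]]; first by exists col.
have ac : a != c by apply: contraTneq big => ->; rewrite -leqNgt ltnW.
set A := colour_class col a; set C := colour_class col c.
have dAC : [disjoint A & C] := colour_classes_disjoint col ac.
have pairsAC : pairs_on vs (A :|: C) by move=> i /setUP[]; rewrite inE => /andP[/pairsX].
have [A' [C' [ACe dAC' pA' pC' sizeA']]] :=
  balance pairsAC dAC (pcol a) (pcol c) (ltn_trans small big).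
have [col' [pcol' class_a class_c others]] := recolour ac pcol ACe dAC' pA' pC'.
(* The excess of a drops by one, and c stays at or below m. *)
apply: (IH col') => //; apply: leq_trans exc.
have sizeC' : #|C'| = #|C|.+1.
  by have := cardsU_disjoint dAC'; rewrite ACe cardsU_disjoint // -sizeA' addSn; lia.
rewrite /excess (bigD1 a) // [X in _ < X](bigD1 a) //= class_a -addSn.
apply: leq_add; first by rewrite -sizeA' subSn // -ltnS sizeA'.
apply: leq_sum => d da; have [->|dc] := eqVneq d c; last by rewrite others.
by rewrite class_c sizeC'; move: small; rewrite -subn_eq0 => /eqP->.
Qed.

End Colourings.

Section DistinctRepresentatives.
Variable K : finType.
Implicit Types M : {set K}.

Definition sdr M1 M2 M3 := exists c1 c2 c3,
  [/\ c1 \in M1, c2 \in M2, c3 \in M3 & [&& c1 != c2, c1 != c3 & c2 != c3]].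

Lemma sdr_swap12 M1 M2 M3 : sdr M1 M2 M3 -> sdr M2 M1 M3.
Proof.
case=> c1 [c2 [c3 [? ? ? /and3P[d12 d13 d23]]]]; exists c2, c1, c3.
by split=> //; rewrite eq_sym d12 d13 d23.
Qed.

Lemma sdr_swap23 M1 M2 M3 : sdr M1 M2 M3 -> sdr M1 M3 M2.
Proof.
case=> c1 [c2 [c3 [? ? ? /and3P[d12 d13 d23]]]]; exists c1, c3, c2.
by split=> //; rewrite d12 d13 eq_sym d23.
Qed.

(* Representatives can be chosen greedily when the lists have sizes 1, 2 and 3. *)
Lemma sdr_greedy M1 M2 M3 : 0 < #|M1| -> 1 < #|M2| -> 2 < #|M3| -> sdr M1 M2 M3.
Proof.
move=> /card_gt0P[c1 c1M1] M2big M3big.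
have /card_gt0P[c2] : 0 < #|M2 :\ c1| by rewrite (cardsD1 c1 M2) in M2big; lia.
rewrite !inE => /andP[c21 c2M2].
have /card_gt0P[c3] : 0 < #|M3 :\: [set c1; c2]|.
  rewrite cardsD; have : #|M3 :&: [set c1; c2]| <= 2.
    apply: leq_trans (subset_leq_card (subsetIr _ _)) _.
    by rewrite cards2; case: (c1 != c2).
  lia.
rewrite !inE negb_or => /andP[/andP[c31 c32] c3M3].
by exists c1, c2, c3; split=> //; rewrite eq_sym c21 eq_sym c31 eq_sym c32.
Qed.

Lemma elem_outside M1 M2 : #|M1| = #|M2| -> M1 != M2 -> exists2 c, c \in M1 & c \notin M2.
Proof.
move=> size12 M12; apply/subsetPn; apply: contra M12 => sub12.
by rewrite eqEcard sub12 size12 /=.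
Qed.

(* Three lists of size two, the first two different, have distinct representatives:
   take d in M1 \ M2 and f in M2 \ M1, then a third colour of M3 if there is one, and
   otherwise M3 = {d, f} and the first representative is changed to the other colour
   of M1. *)
Lemma sdr_pairs M1 M2 M3 : #|M1| = 2 -> #|M2| = 2 -> #|M3| = 2 -> M1 != M2 -> sdr M1 M2 M3.
Proof.
move=> size1 size2 size3 M12.
have [d dM1 dM2] := elem_outside (etrans size1 (esym size2)) M12.
have M21 : M2 != M1 by rewrite eq_sym.
have [f fM2 fM1] := elem_outside (etrans size2 (esym size1)) M21.
have df : d != f by apply: contraTneq dM1 => ->.
have [M3df|/subsetPn[c cM3]] := boolP (M3 \subset [set d; f]); last first.
  rewrite !inE negb_or => /andP[cd cf]; exists d, f, c.
  by split; rewrite // df eq_sym cd eq_sym cf.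
have dM3 : d \in M3.
  have /eqP-> : M3 == [set d; f] by rewrite eqEcard M3df cards2 df size3.
  exact: set21.
have /card_gt0P[d' /setD1P[d'd d'M1]] : 0 < #|M1 :\ d|.
  by rewrite (cardsD1 d M1) dM1 in size1; lia.
have d'f : d' != f by apply: contraTneq d'M1 => ->.
by exists d', f, d; split; rewrite // d'f d'd eq_sym df.
Qed.

Lemma sdr_lists M1 M2 M3 : 1 < #|M1| -> 1 < #|M2| -> 1 < #|M3| ->
  ~~ [&& M1 == M2, M2 == M3 & #|M1| == 2] -> sdr M1 M2 M3.
Proof.
move=> big1 big2 big3 not_same.
have [M3big|] := ltnP 2 #|M3|; first exact: sdr_greedy (ltnW big1) big2 M3big.
have [M2big _|] := ltnP 2 #|M2|.
  by apply: sdr_swap23; apply: sdr_greedy (ltnW big1) big3 M2big.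
have [M1big _ _|] := ltnP 2 #|M1|.
  by apply: sdr_swap12; apply: sdr_swap23; apply: sdr_greedy (ltnW big2) big3 M1big.
move=> small1 small2 small3.
have size1 : #|M1| = 2 by lia.
have size2 : #|M2| = 2 by lia.
have size3 : #|M3| = 2 by lia.
have [M12|] := eqVneq M1 M2; last exact: sdr_pairs.
have [M23|M23] := eqVneq M2 M3; first by move: not_same; rewrite M12 M23 size3 !eqxx.
by apply: sdr_swap23; apply: sdr_pairs; rewrite // M12.
Qed.

End DistinctRepresentatives.

Section CubicGraph.
Variables (T : finType) (e : rel T).
Hypotheses (simple_e : simple_graph e) (cubic_e : cubic e).
Implicit Types (u v w : T) (A : {set T}).

Lemma edge_neq u w : e u w -> u != w.
Proof. by case: simple_e => irr _ euw; apply: contraTneq euw => ->; rewrite irr. Qed.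

Lemma edge_sym u w : e u w -> e w u.
Proof. by case: simple_e => _ sym; rewrite sym. Qed.

Lemma edgesP A : reflect (exists u w, e u w /\ A = [set u; w]) (A \in edges e).
Proof.
rewrite inE; apply: (iffP existsP) => [[u /existsP[w /andP[euw /eqP->]]]|[u [w [euw ->]]]].
  by exists u, w.
by exists u; apply/existsP; exists w; rewrite euw eqxx.
Qed.

Lemma edge_in u w : e u w -> [set u; w] \in edges e.
Proof. by move=> euw; apply/edgesP; exists u, w. Qed.

Lemma edge_card A : A \in edges e -> #|A| = 2.
Proof. by case/edgesP=> u [w [euw ->]]; rewrite cards2 edge_neq. Qed.

Lemma edge_at v A : A \in edges e -> v \in A -> exists w, e v w /\ A = [set v; w].
Proof.
case/edgesP=> u [w [euw ->]] /set2P[]->; first by exists w.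
by exists u; split; [exact: edge_sym | exact: setUC].
Qed.

Lemma card_edges_at v : #|[set A in edges e | v \in A]| = 3.
Proof.
have -> : [set A in edges e | v \in A] = [set [set v; w] | w in [set w | e v w]].
  apply/setP => A; rewrite inE; apply/andP/imsetP => [[EA vA]|[w]].
    by have [w [evw ->]] := edge_at EA vA; exists w; rewrite ?inE.
  by rewrite inE => evw ->; rewrite edge_in // set21.
rewrite card_in_imset ?cubic_e // => w1 w2; rewrite inE => /edge_neq vw1 _.
exact: set2_inj.
Qed.

(* Handshake lemma for cubic graphs: every vertex lies on three edges, every edge has
   two vertices. *)
Lemma handshake : 2 * #|edges e| = 3 * #|T|.
Proof.
have by_edges : \sum_(A in edges e) \sum_v (v \in A : nat) = 2 * #|edges e|.
  rewrite -sum1_card big_distrr /=; apply: eq_bigr => A EA.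
  by rewrite muln1 -(edge_card EA) -sum1_card [RHS]big_mkcond; apply: eq_bigr => v _.
have by_vertices : \sum_v \sum_(A in edges e) (v \in A : nat) = 3 * #|T|.
  rewrite -sum1_card big_distrr /=; apply: eq_bigr => v _.
  by rewrite muln1 -(card_edges_at v) card_filter_sum.
by rewrite -by_edges -by_vertices exchange_big.
Qed.

Lemma neighbours v : exists x y z,
  [/\ x != y, x != z & y != z] /\ [set w | e v w] = [set x; y; z].
Proof.
have /card_gt0P[x xN] : 0 < #|[set w | e v w]| by rewrite cubic_e.
have /cards2P[y [z [yz Ne]]] : #|[set w | e v w] :\ x| == 2.
  by have := cubic_e v; rewrite (cardsD1 x) xN add1n => -[->].
have /setD1P[yx _] : y \in [set w | e v w] :\ x by rewrite Ne set21.
have /setD1P[zx _] : z \in [set w | e v w] :\ x by rewrite Ne set22.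
exists x, y, z; split; first by rewrite eq_sym yx eq_sym zx.
by rewrite -(setD1K xN) Ne setUA.
Qed.

Section ColouringAtVertex.
(* The inductive step of the 4-edge-colouring theorem: a colouring of the edges of E
   avoiding v extends to E, where x, y, z are the three neighbours of v. *)
Variables (E : {set {set T}}) (v x y z : T).
Hypotheses (E_edges : E \subset edges e) (nbrs_v : [set w | e v w] = [set x; y; z])
  (xy : x != y) (xz : x != z) (yz : y != z).
Implicit Types (col : {set T} -> 'I_4) (d : 'I_4).

Let E0 := [set A in E | v \notin A].

Definition free col u := [set d | ~~ covers id (colour_class E0 col d) u].
Definition options col u := if [set v; u] \in E then free col u else setT.

Lemma nbr_v u : u \in [set x; y; z] -> e v u.
Proof. by rewrite -nbrs_v inE. Qed.

(* A neighbour u of v is on at most two edges of E0, so at least two colours are free. *)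
Lemma free_ge2 col u : e v u -> 1 < #|free col u|.
Proof.
move=> evu; set U := [set A in edges e | u \in A] :\ [set u; v].
have sizeU : #|U| = 2.
  have uv_at_u : [set u; v] \in [set A in edges e | u \in A].
    by rewrite inE edge_in ?set21 // edge_sym.
  by have := card_edges_at u; rewrite (cardsD1 [set u; v]) uv_at_u add1n => -[].
have used_sub : ~: free col u \subset col @: [set A in E0 | u \in A].
  apply/subsetP => d; rewrite !inE negbK => /coversP[A].
  rewrite inE => /andP[AE0 /eqP<-] uA.
  by apply/imsetP; exists A; rewrite // inE AE0.
have at_u_sub : [set A in E0 | u \in A] \subset U.
  apply/subsetP => A; rewrite inE => /andP[]; rewrite inE => /andP[AE vA] uA.
  rewrite in_setD1 inE (subsetP E_edges _ AE) uA !andbT.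
  by apply: contraNneq vA => ->; exact: set22.
have : #|~: free col u| <= #|U|.
  apply: leq_trans (subset_leq_card used_sub) _.
  exact: leq_trans (leq_imset_card _ _) (subset_leq_card at_u_sub).
by rewrite sizeU; have := cardsC (free col u); rewrite card_ord; lia.
Qed.

Lemma options_ge2 col u : u \in [set x; y; z] -> 1 < #|options col u|.
Proof.
move=> uN; rewrite /options; case: ifP => _; first exact/free_ge2/nbr_v.
by rewrite cardsT card_ord.
Qed.

Lemma edge_at_v A : A \in E -> v \in A -> exists2 u, u \in [set x; y; z] & A = [set v; u].
Proof.
move=> AE vA; have [u [evu ->]] := edge_at (subsetP E_edges _ AE) vA.
by exists u; rewrite // -nbrs_v inE.
Qed.

(* If the lists of allowed colours at x, y, z have distinct representatives, the
   colouring of E0 extends to E by giving the edge {v, u} the representative at u. *)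
Lemma extend_at_vertex col :
  proper id E0 col -> sdr (options col x) (options col y) (options col z) ->
  exists col', proper id E col'.
Proof.
move=> pcol [cx [cy [cz [cxO cyO czO /and3P[cxy cxz cyz]]]]].
pose cu u := if x == u then cx else if y == u then cy else cz.
pose col' A := if v \in A then (if x \in A then cx else if y \in A then cy else cz)
               else col A.
have v_nbr u : u \in [set x; y; z] -> (u == v) = false.
  by move=> /nbr_v /edge_neq; rewrite eq_sym => /negbTE.
have col'_vu u : u \in [set x; y; z] -> col' [set v; u] = cu u.
  have xN : x \in [set x; y; z] by rewrite !inE eqxx.
  have yN : y \in [set x; y; z] by rewrite !inE eqxx orbT.
  by move=> uN; rewrite /col' set21 !inE !v_nbr.
have cu_option u : u \in [set x; y; z] -> cu u \in options col u.
  by rewrite /cu => /set3P[]->; rewrite ?eqxx ?(negbTE xy) ?(negbTE xz) ?(negbTE yz).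
have cu_inj : {in [set x; y; z] &, injective cu}.
  move=> u1 u2; rewrite /cu => /set3P[]-> /set3P[]->;
  rewrite ?eqxx ?(negbTE xy) ?(negbTE xz) ?(negbTE yz) // => eq_c;
  by move: cxy cxz cyz; rewrite eq_c eqxx.
have col'_off A : v \notin A -> col' A = col A by rewrite /col' => /negbTE->.
have off_E0 A : A \in E -> v \notin A -> A \in E0 by move=> AE vA; rewrite inE AE vA.
(* An edge {v, u} and an edge of E0 of the same colour are disjoint, as that colour is
   free at u. *)
have mixed i j : i \in E -> j \in E -> v \in i -> v \notin j -> col' i = col' j ->
    [disjoint i & j].
  move=> iE jE vi vj cij; have [u uN ei] := edge_at_v iE vi.
  have := cu_option u uN; rewrite /options -ei iE inE => free_u.
  rewrite ei disjoints_subset subUset !sub1set !inE vj /=.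
  apply: contra free_u => uj; apply/coversP; exists j => //.
  by rewrite inE off_E0 //= -col'_off // -cij ei col'_vu.
exists col' => d i j; rewrite !inE => /andP[iE /eqP ci] /andP[jE /eqP cj] ij.
have [vi|vi] := boolP (v \in i); have [vj|vj] := boolP (v \in j).
- have [u1 u1N ei] := edge_at_v iE vi; have [u2 u2N ej] := edge_at_v jE vj.
  move: ij; rewrite ei ej; suff -> : u1 = u2 by rewrite eqxx.
  by apply: cu_inj => //; rewrite -!col'_vu // -ei -ej ci cj.
- by apply: mixed; rewrite // ci cj.
- by rewrite disjoint_sym; apply: mixed; rewrite // ci cj.
- by apply: (pcol d); rewrite // inE off_E0 //= -col'_off // ?ci ?cj.
Qed.

Lemma kempe_at_vertex col :
  proper id E0 col -> 0 < #|free col x| < 4 ->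
  exists col1 c w0, [/\ proper id E0 col1, c \in free col1 x, c \notin free col x
    & forall u, u != x -> u != w0 -> free col1 u = free col u].
Proof.
move=> pcol /andP[/card_gt0P[a aF] not_all].
have /card_gt0P[c] : 0 < #|~: free col x|.
  by have := cardsC (free col x); rewrite card_ord; lia.
rewrite inE => cU.
have ac : a != c by apply: contraNneq cU => <-.
set A := colour_class E0 col a; set C := colour_class E0 col c.
have pairsAC : pairs_on id (A :|: C).
  move=> i; rewrite !inE => /orP[]/andP[/andP[iE _] _]; exact/edge_card/(subsetP E_edges).
have nAx : ~~ covers id A x by move: aF; rewrite inE.
have [A' [C' [w0 [ACe dAC' [pA' pC'] [_ nC'x] unchanged]]]] :=
  kempe_swap pairsAC (colour_classes_disjoint E0 col ac) (pcol a) (pcol c) nAx.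
have [col1 [pcol1 class_a class_c others]] := recolour ac pcol ACe dAC' pA' pC'.
exists col1, c, w0; split=> // [|u ux uw0]; first by rewrite inE class_c.
have [covA covC] := unchanged u ux uw0.
apply/setP => d; rewrite !inE.
have [->|da] := eqVneq d a; first by rewrite class_a covA.
have [->|dc] := eqVneq d c; first by rewrite class_c covC.
by rewrite others.
Qed.

Lemma options_free col u : [set v; u] \in E -> options col u = free col u.
Proof. by rewrite /options => ->. Qed.

(* Some colouring of E0 has lists of allowed colours at x, y, z with distinct
   representatives: this can only fail when the three lists are one and the same pair
   of colours, and then a Kempe swap at x separates the list at x from the list at y
   or at z (whichever is not the far end of the chain). *)
Lemma sdr_options col0 :
  proper id E0 col0 ->
  exists col, proper id E0 col /\ sdr (options col x) (options col y) (options col z).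
Proof.
have xN : x \in [set x; y; z] by rewrite !inE eqxx.
have yN : y \in [set x; y; z] by rewrite !inE eqxx orbT.
have zN : z \in [set x; y; z] by rewrite !inE eqxx !orbT.
have lists_ok col : ~~ [&& options col x == options col y, options col y == options col z
    & #|options col x| == 2] -> sdr (options col x) (options col y) (options col z).
  by apply: sdr_lists; apply: options_ge2.
move=> pcol0.
have [same|] := boolP [&& options col0 x == options col0 y, options col0 y == options col0 z
    & #|options col0 x| == 2]; last by exists col0; split; last apply: lists_ok.
case/and3P: same => /eqP O0xy /eqP O0yz /eqP O0x2.
have O0 u : u \in [set y; z] -> options col0 u = options col0 x.
  by case/set2P=> ->; rewrite O0xy ?O0yz.
have vuE u : #|options col0 u| = 2 -> [set v; u] \in E.
  by rewrite /options; case: ifP => // _; rewrite cardsT card_ord.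
have Ex := vuE x O0x2.
have free_x : 0 < #|free col0 x| < 4 by rewrite -options_free // O0x2.
have [col1 [c [w0 [pcol1 cF1 cF0 unchanged]]]] := kempe_at_vertex pcol0 free_x.
exists col1; split=> //; apply: lists_ok; apply/negP => /and3P[/eqP O1xy /eqP O1yz _].
have O1 u : u \in [set y; z] -> options col1 u = options col1 x.
  by case/set2P=> ->; rewrite O1xy ?O1yz.
have separated u : u \in [set y; z] -> u != w0 -> False.
  move=> uyz uw0; have ux : u != x by case/set2P: uyz => ->; rewrite eq_sym.
  have uE : [set v; u] \in E by apply: vuE; rewrite O0.
  move: cF1; rewrite -options_free // -(O1 u uyz) options_free // unchanged //.
  by rewrite -options_free // (O0 u uyz) options_free // (negbTE cF0).
have [yw0|yw0] := eqVneq y w0; last by apply: (separated y); rewrite ?set21.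
by apply: (separated z); rewrite ?set22 // -yw0 eq_sym.
Qed.

End ColouringAtVertex.

(* Every subset of the edges of a cubic graph has a proper colouring with four colours
   (Vizing's theorem for maximum degree 3), by induction on the number of edges:
   remove the edges at a vertex v, colour the rest, and extend at v. *)
Lemma four_edge_colouring (E : {set {set T}}) :
  E \subset edges e -> exists col : {set T} -> 'I_4, proper id E col.
Proof.
have [n] := ubnP #|E|; elim: n => // n IH in E *; rewrite ltnS => sizeE E_edges.
have [->|[A0 A0E]] := set_0Vmem E.
  by exists (fun=> ord0) => d i j; rewrite !inE.
have /card_gt0P[v vA0] : 0 < #|A0| by rewrite edge_card ?(subsetP E_edges).
have [x [y [z [[xy xz yz] nbrs_v]]]] := neighbours v.
have [||col0 pcol0] := IH [set A in E | v \notin A].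
- apply: leq_trans sizeE; apply: proper_card; apply/properP.
  split; first by apply/subsetP => A; rewrite inE => /andP[].
  by exists A0; rewrite // inE vA0 andbF.
- by apply: subset_trans E_edges; apply/subsetP => A; rewrite inE => /andP[].
have [col [pcol sdr_col]] := sdr_options E_edges nbrs_v xy xz yz pcol0.
by have := extend_at_vertex E_edges nbrs_v xy xz yz pcol sdr_col.
Qed.

End CubicGraph.

Section Covers.
Variables (T : finType) (e : rel T).
Implicit Types (E R : {set {set T}}).

Lemma m_cover_card m j : m_cover e m j -> #|edges e| <= j * m.
Proof.
case=> F [F_m <-]; apply: leq_trans (card_bigcup_le F) _.
by rewrite (eq_bigr (fun=> m)) ?sum_nat_const ?card_ord // => i _; case: (F_m i).
Qed.

(* A proper colouring with k classes of m members each, of a family of pairs whose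
   vertex sets are exactly the edges, yields a covering by k [m]-matchings; a class
   never contains two members with the same vertex set, as these would intersect. *)
Lemma cover_of_colouring (I : finType) (vs : I -> {set T}) (X : {set I}) k m
    (col : I -> 'I_k) :
  proper vs X col -> pairs_on vs X -> vs @: X = edges e ->
  (forall d, #|colour_class X col d| = m) -> m_cover e m k.
Proof.
move=> pcol pairsX imX sizes.
have classX d i : i \in colour_class X col d -> i \in X by rewrite inE => /andP[].
have vs_inj d : {in colour_class X col d &, injective vs}.
  move=> i j iC jC vij; apply/eqP/negPn/negP => ij.
  have := pcol d i j iC jC ij; rewrite vij -setI_eq0 setIid -cards_eq0.
  by rewrite pairsX // (classX d).
exists (fun d => vs @: colour_class X col d); split.
  move=> d; split; last by rewrite card_in_imset.
  split.
    by apply/subsetP => _ /imsetP[i iC ->]; rewrite -imX imset_f // (classX d).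
  move=> _ _ /imsetP[i iC ->] /imsetP[j jC ->] vij.
  by apply: (pcol d i j iC jC); apply: contraNneq vij => ->.
rewrite -imX; apply/setP => A; apply/bigcupP/imsetP => [[d _ /imsetP[i iC ->]]|[i iX ->]].
  by exists i; rewrite // (classX d).
by exists (col i) => //; apply: imset_f; rewrite inE iX eqxx.
Qed.

(* All edges of E, plus a second copy of each edge of R, tagged by a boolean. *)
Definition padded (E R : {set {set T}}) : {set {set T} * bool} :=
  setX E [set false] :|: setX R [set true].

Lemma mem_padded E R A b : ((A, b) \in padded E R) = if b then A \in R else A \in E.
Proof. by rewrite !inE /=; case: b; rewrite ?andbT ?andbF ?orbF. Qed.

Lemma card_padded E R : #|padded E R| = #|E| + #|R|.
Proof.
rewrite cardsU_disjoint ?cardsX ?cards1 ?muln1 //.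
by rewrite -setI_eq0; apply/eqP/setP => -[A b]; rewrite !inE; case: b; rewrite ?andbF.
Qed.

Lemma padded_edges E R : R \subset E -> fst @: padded E R = E.
Proof.
move=> RE; apply/setP => A; apply/imsetP/idP => [[[B b] + ->]|AE].
  by rewrite mem_padded; case: b => //; apply: (subsetP RE).
by exists (A, false); rewrite ?mem_padded.
Qed.

Lemma padded_pairs R :
  simple_graph e -> R \subset edges e -> pairs_on fst (padded (edges e) R).
Proof.
move=> simple_e RE [A b]; rewrite mem_padded => Ab; apply: (edge_card simple_e).
by case: b Ab => // /(subsetP RE).
Qed.

(* From a proper 4-edge-colouring and a set R of edges of one colour c0, the padded
   family gets a proper colouring with k >= 5 colours: the copies of R, which form a
   matching, receive the fifth colour. *)
Lemma padded_colouring k (col4 : {set T} -> 'I_4) c0 R :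
  4 < k -> proper id (edges e) col4 -> R \subset colour_class (edges e) col4 c0 ->
  exists col : {set T} * bool -> 'I_k, proper fst (padded (edges e) R) col.
Proof.
move=> k_gt4 pcol4 R_c0.
pose col (p : {set T} * bool) : 'I_k :=
  if p.2 then Ordinal k_gt4 else widen_ord (ltnW k_gt4) (col4 p.1).
have in_c0 A : A \in R -> A \in colour_class (edges e) col4 c0 by apply: (subsetP R_c0).
exists col => d [A b] [B b']; rewrite [(A, b) \in _]inE [(B, b') \in _]inE !mem_padded.
move=> /andP[Ab /eqP cA] /andP[Bb' /eqP cB] AB; have {cA cB}cAB := etrans cA (esym cB).
case: b b' Ab Bb' cAB AB => [] [] /= Ab Bb' cAB AB.
- by apply: (pcol4 c0); rewrite ?in_c0 //; apply: contraNneq AB => ->.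
- by move: (congr1 val cAB) (ltn_ord (col4 B)) => /= <-.
- by move: (congr1 val cAB) (ltn_ord (col4 A)) => /= ->.
- have c4AB : col4 A = col4 B by apply: val_inj; apply: (congr1 val cAB).
  apply: (pcol4 (col4 A)); [by rewrite inE Ab eqxx | by rewrite inE Bb' c4AB eqxx |].
  by apply: contraNneq AB => ->.
Qed.

End Covers.

Theorem proposition1 (T : finType) (e : rel T) (n m : nat) :
  simple_graph e -> cubic e -> connected_graph e ->
  #|T| = 2 * n ->
  0 < m ->
  m < ceil_div (3 * n) 4 ->
  excessive_index_eq e m (ceil_div (3 * n) m).
Proof.
move=> simple_e cubic_e _ sizeT m_gt0 m_small.
have card_E : #|edges e| = 3 * n by have := handshake simple_e cubic_e; rewrite sizeT; lia.
set k := ceil_div (3 * n) m.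
(* Lower bound: j [m]-matchings cover at most j * m edges. *)
split; last by move=> j /m_cover_card; rewrite ceil_div_leq // card_E.
have /andP[km_ge km_lt] := ceil_div_bounds (3 * n) m_gt0.
have m4_lt : m * 4 < 3 * n by move: m_small; rewrite ltnNge ceil_div_leq // -ltnNge.
have k_gt4 : 4 < k by rewrite ltnNge ceil_div_leq // -ltnNge mulnC.
(* Upper bound: pad a 4-edge-colouring to a k-colouring of k * m edge copies,
   equalize it, and read off k [m]-matchings. *)
have [col4 pcol4] := four_edge_colouring simple_e cubic_e (subxx (edges e)).
have [c0 big_c0] : exists c0, m < #|colour_class (edges e) col4 c0|.
  by apply: pigeonhole_sum; rewrite sum_colour_classes card_E; lia.
have small_pad : k * m - 3 * n <= #|colour_class (edges e) col4 c0| by lia.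
have [R R_c0 sizeR] := subset_of_card small_pad.
have R_edges : R \subset edges e.
  by apply: subset_trans R_c0 _; apply/subsetP => A; rewrite inE => /andP[].
have pairs_pad := padded_pairs simple_e R_edges.
have card_pad : #|padded (edges e) R| = k * m by rewrite card_padded card_E sizeR; lia.
have [col pcol] := padded_colouring k_gt4 pcol4 R_c0.
have [col' [pcol' sizes]] := equalize pcol pairs_pad card_pad.
exact: cover_of_colouring pcol' pairs_pad (padded_edges R_edges) sizes.
Qed.
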